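(* Let $\mathcal M$ be a local Moufang set with basis $(0,\infty)$. Then, as subsets of the little projective group, $U_0^\circ\,U_\infty\subseteq U_\infty\,H\,U_0^\circ$.
   Context: Group actions are right actions, written $xg$; conjugation is $g^h=h^{-1}gh$. For a set $X$ with an equivalence relation $\sim$, $\overline{x}$ denotes the class of $x$, $\overline X$ the set of classes, and $\mathrm{Sym}(X,\sim)$ the group of bijections $g$ of $X$ with $x\sim y\iff xg\sim yg$; each such $g$ induces a permutation $\overline g$ of $\overline X$, and for a subgroup $U\le \mathrm{Sym}(X,\sim)$, $\overline U$ is the induced group of permutations of $\overline X$. A local Moufang set consists of a set with equivalence relation $(X,\sim)$ with $|\overline X|>2$ and, for each $x\in X$, a subgroup (root group) $U_x\le\mathrm{Sym}(X,\sim)$ such that: (LM0) if $x\sim y$ then $\overline{U_x}=\overline{U_y}$; (LM1) $U_x$ fixes $x$ and acts sharply transitively on $X\setminus\overline x$; (LM1') $\overline{U_x}$ fixes $\overline x$ and acts sharply transitively on $\overline X\setminus\{\overline x\}$; (LM2) $U_x^g=U_{xg}$ for all $x\in X$ and all $g$ in the little projective group $G:=\langle U_x\mid x\in X\rangle$. A basis is a fixed pair $(0,\infty)$ with $0\not\sim\infty$. For $x\not\sim\infty$, $\alpha_x$ is the unique element of $U_\infty$ with $0\alpha_x=x$. A unit is $x\in X$ with $x\not\sim0$, $x\not\sim\infty$; for a unit $x$, $\mu_x$ is the unique element of $U_0\alpha_xU_0$ interchanging $0$ and $\infty$. The Hua subgroup is $H:=\langle\mu_x\mu_y\mid x,y\text{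 units}\rangle$. For $x\in X$, $U_x^\circ:=\{u\in U_x\mid \overline u=\mathrm{id}_{\overline X}\}$. *)

(* Conventions: group elements are maps f : X -> X; right actions x g are
   written (g x); a product g h (first g, then h) is the map fun z => h (g z). *)

Section LMS.
Variable X : Type.
Variable eqv : X -> X -> Prop.

Definition is_equivalence : Prop :=
  (forall x, eqv x x) /\ (forall x y, eqv x y -> eqv y x) /\
  (forall x y z, eqv x y -> eqv y z -> eqv x z).

Definition inverse_map (s t : X -> X) : Prop :=
  (forall z, t (s z) = z) /\ (forall z, s (t z) = z).

Definition in_Sym (f : X -> X) : Prop :=
  (exists g, inverse_map f g) /\ (forall x y, eqv x y <-> eqv (f x) (f y)).

Definition subgroup_Sym (V : (X -> X) -> Prop) : Prop :=
  (forall u, V u -> in_Sym u) /\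
  V (fun z => z) /\
  (forall u v, V u -> V v -> V (fun z => v (u z))) /\
  (forall u, V u -> exists v, V v /\ inverse_map u v).

Inductive gen (S : (X -> X) -> Prop) : (X -> X) -> Prop :=
| gen_id : gen S (fun z => z)
| gen_mul : forall g s, gen S g -> S s -> gen S (fun z => s (g z))
| gen_mulinv : forall g s t, gen S g -> S s -> inverse_map s t ->
    gen S (fun z => t (g z)).

Variable U : X -> (X -> X) -> Prop.

Definition little_proj_group : (X -> X) -> Prop :=
  gen (fun g => exists x, U x g).

Definition is_local_moufang_set : Prop :=
  is_equivalence /\
  (exists a b c, ~ eqv a b /\ ~ eqv a c /\ ~ eqv b c) /\
  (forall x, subgroup_Sym (U x)) /\
  (* (LM0): x ~ y -> bar(U_x) = bar(U_y) *)
  (forall x y, eqv x y -> forall u, U x u ->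
     exists v, U y v /\ forall w, eqv (u w) (v w)) /\
  (forall x u, U x u -> u x = x) /\
  (forall x y z, ~ eqv y x -> ~ eqv z x -> exists u, U x u /\ u y = z) /\
  (forall x y u v, ~ eqv y x -> U x u -> U x v -> u y = v y ->
     forall w, u w = v w) /\
  (* (LM1'): bar(U_x) fixes bar x and is sharply transitive on
     bar X \ {bar x} *)
  (forall x u, U x u -> eqv (u x) x) /\
  (forall x y z, ~ eqv y x -> ~ eqv z x -> exists u, U x u /\ eqv (u y) z) /\
  (forall x y u v, ~ eqv y x -> U x u -> U x v -> eqv (u y) (v y) ->
     forall w, eqv (u w) (v w)) /\
  (* (LM2): U_x^g = U_{xg} for g in G, i.e.
     v in U_{xg}  <->  v = g^-1 u g for some u in U_x  <->  g v = u g *)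
  (forall g, little_proj_group g -> forall x v,
     U (g x) v <-> exists u, U x u /\ forall z, v (g z) = g (u z)).

Variables zero inf : X.

Definition is_alpha (x : X) (a : X -> X) : Prop := U inf a /\ a zero = x.

Definition is_unit (x : X) : Prop := ~ eqv x zero /\ ~ eqv x inf.

Definition is_mu (x : X) (m : X -> X) : Prop :=
  (exists u1 a u2, U zero u1 /\ is_alpha x a /\ U zero u2 /\
     forall z, m z = u2 (a (u1 z))) /\
  m zero = inf /\ m inf = zero.

Definition hua_subgroup : (X -> X) -> Prop :=
  gen (fun h => exists x y m1 m2, is_unit x /\ is_unit y /\
         is_mu x m1 /\ is_mu y m2 /\ forall z, h z = m2 (m1 z)).

Definition U_circ (x : X) (u : X -> X) : Prop :=
  U x u /\ forall z, eqv (u z) z.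

End LMS.

From Stdlib Require Import Classical.

(* Products are read in right-action order.  Bruhat step: if g in U_0 moves
   the class of inf and b in U_inf has 0 b = inf g, pick b0 in U_inf with
   0 b0 = inf g^-1; then s = b0 g b^-1 interchanges 0 and inf, so
   g in U_inf s b.  Such an s is a mu_x: conjugating the three factors of
   s by s itself exhibits s in U_0 alpha_x U_0.
   If 0 b is not ~ 0, choose g2 in U_0 with inf g2 = 0 b^-1.  The Bruhat
   step gives g2 b = c2 mu2 and a g2^-1 = c1 mu1 b1, so
   a b = c1 (mu1 mu2) d with d = mu2^-1 b1 c2 mu2 in U_0; d fixes the class
   of inf, hence is bar-trivial by sharpness of bar(U_0).
   If 0 b ~ 0, write b = b1 b2 with 0 b1 a unit and apply that case twice;
   the middle U_inf factor moves left past the Hua element, which fixes inf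
   and so normalizes U_inf. *)

Section Generation.

Variables (X : Type) (S : (X -> X) -> Prop).

Lemma gen_of_generator s : S s -> gen X S s.
Proof. intro Hs. exact (gen_mul X S _ s (gen_id X S) Hs). Qed.

Lemma gen_comp g h : gen X S g -> gen X S h -> gen X S (fun z => h (g z)).
Proof.
  intros Hg Hh. induction Hh as [| k s _ IH Hs | k s t _ IH Hs Hst].
  - exact Hg.
  - exact (gen_mul X S _ s IH Hs).
  - exact (gen_mulinv X S _ s t IH Hs Hst).
Qed.

Lemma gen_inverse :
  (forall s, S s -> exists t, gen X S t /\ inverse_map X s t) ->
  forall g, gen X S g -> exists gi, gen X S gi /\ inverse_map X g gi.
Proof.
  intros HS g Hg. induction Hg as [| g s _ IH Hs | g s t _ IH Hs [Hts Hst]];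
    [| destruct IH as (gi & Hgi & Hgi1 & Hgi2) ..].
  - exists (fun z => z). split; [apply gen_id | split; reflexivity].
  - destruct (HS s Hs) as (t & Ht & Ht1 & Ht2).
    exists (fun z => gi (t z)). split; [exact (gen_comp _ _ Ht Hgi) |].
    split; intro z; [rewrite Ht1; apply Hgi1 | rewrite Hgi2; apply Ht2].
  - exists (fun z => gi (s z)).
    split; [exact (gen_comp _ _ (gen_of_generator s Hs) Hgi) |].
    split; intro z; [rewrite Hst; apply Hgi1 | rewrite Hgi2; apply Hts].
Qed.

End Generation.

Section LocalMoufangSet.

Variables (X : Type) (eqv : X -> X -> Prop) (U : X -> (X -> X) -> Prop).
Hypothesis HLMS : is_local_moufang_set X eqv U.

Local Notation G := (little_proj_group X U).

Lemma eqv_sym x y : eqv x y -> eqv y x.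
Proof. destruct HLMS as ((_ & Hsym & _) & _). apply Hsym. Qed.

Lemma eqv_trans x y z : eqv x y -> eqv y z -> eqv x z.
Proof. destruct HLMS as ((_ & _ & Htrans) & _). apply Htrans. Qed.

Lemma exists_outside_classes x y : exists e, ~ eqv e x /\ ~ eqv e y.
Proof.
  destruct HLMS as (_ & (p & q & r & Hpq & Hpr & Hqr) & _).
  destruct (classic (exists e, ~ eqv e x /\ ~ eqv e y)) as [He | He]; [exact He |].
  exfalso.
  assert (Hin : forall e, eqv e x \/ eqv e y).
  { intro e. destruct (classic (eqv e x)); [tauto |].
    destruct (classic (eqv e y)); [tauto |]. exfalso; eauto. }
  assert (Hjoin : forall e f c, eqv e c -> eqv f c -> eqv e f).
  { intros e f c Hec Hfc. exact (eqv_trans _ _ _ Hec (eqv_sym _ _ Hfc)). }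
  destruct (Hin p), (Hin q), (Hin r); eauto.
Qed.

Lemma root_id x : U x (fun z => z).
Proof. destruct HLMS as (_ & _ & Hsub & _). apply (Hsub x). Qed.

Lemma root_comp x u v : U x u -> U x v -> U x (fun z => v (u z)).
Proof. destruct HLMS as (_ & _ & Hsub & _). apply (Hsub x). Qed.

Lemma root_inv x u : U x u -> exists v, U x v /\ inverse_map X u v.
Proof. destruct HLMS as (_ & _ & Hsub & _). apply (Hsub x). Qed.

Lemma root_eqv_map x u y z : U x u -> eqv y z -> eqv (u y) (u z).
Proof.
  destruct HLMS as (_ & _ & Hsub & _). intro Hu.
  apply (proj1 (Hsub x) u Hu).
Qed.

Lemma root_eqv_reflect x u y z : U x u -> eqv (u y) (u z) -> eqv y z.
Proof.
  destruct HLMS as (_ & _ & Hsub & _). intro Hu.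
  apply (proj1 (Hsub x) u Hu).
Qed.

Lemma root_fix x u : U x u -> u x = x.
Proof. destruct HLMS as (_ & _ & _ & _ & Hfix & _). apply Hfix. Qed.

Lemma root_transitive x y z :
  ~ eqv y x -> ~ eqv z x -> exists u, U x u /\ u y = z.
Proof. destruct HLMS as (_ & _ & _ & _ & _ & Htr & _). apply Htr. Qed.

Lemma root_bar_sharp x y u v : ~ eqv y x -> U x u -> U x v ->
  eqv (u y) (v y) -> forall w, eqv (u w) (v w).
Proof.
  destruct HLMS as (_ & _ & _ & _ & _ & _ & _ & _ & _ & Hsharp & _).
  apply Hsharp.
Qed.

Lemma root_conj_pullback g x v : G g -> U (g x) v ->
  exists u, U x u /\ forall z, v (g z) = g (u z).
Proof.
  destruct HLMS as (_ & _ & _ & _ & _ & _ & _ & _ & _ & _ & HLM2).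
  intros Hg. apply (HLM2 g Hg).
Qed.

Lemma root_not_eqv_pole x u y : U x u -> ~ eqv y x -> ~ eqv (u y) x.
Proof.
  intros Hu Hy Huy. apply Hy.
  apply (root_eqv_reflect x u y x Hu). rewrite (root_fix x u Hu). exact Huy.
Qed.

Lemma root_bar_trivial x u y : U x u -> ~ eqv y x -> eqv (u y) y ->
  forall w, eqv (u w) w.
Proof.
  intros Hu Hy Huy. exact (root_bar_sharp x y u _ Hy Hu (root_id x) Huy).
Qed.

Lemma root_inv_bar_fix x u v y : U x v -> (forall z, v (u z) = z) ->
  ~ eqv y x -> eqv (v y) y -> eqv (u y) y.
Proof.
  intros Hv Hvu Hy Hvy. apply eqv_sym.
  rewrite <- (Hvu y) at 1. exact (root_bar_trivial x v y Hv Hy Hvy (u y)).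
Qed.

Lemma root_in_G x u : U x u -> G u.
Proof. intro Hu. apply gen_of_generator. exists x. exact Hu. Qed.

Lemma G_inverse g : G g -> exists gi, G gi /\ inverse_map X g gi.
Proof.
  apply gen_inverse. intros s [x Hs].
  destruct (root_inv x s Hs) as (t & Ht & Hst).
  exists t. split; [exact (root_in_G x t Ht) | exact Hst].
Qed.

Lemma root_conj g x u : G g -> U x u ->
  exists v, U (g x) v /\ forall z, v (g z) = g (u z).
Proof.
  intros Hg Hu. destruct (G_inverse g Hg) as (gi & Hgi & Hgi1 & Hgi2).
  assert (Hu' : U (gi (g x)) u) by (rewrite Hgi1; exact Hu).
  destruct (root_conj_pullback gi (g x) u Hgi Hu') as (v & Hv & Hvu).
  exists v. split; [exact Hv |]. intro z.
  rewrite <- (Hgi2 (v (g z))), <- Hvu, Hgi1. reflexivity.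
Qed.

Variables zero inf : X.
Hypothesis Hbasis : ~ eqv zero inf.

Lemma inf_not_eqv_zero : ~ eqv inf zero.
Proof. intro H. apply Hbasis, eqv_sym, H. Qed.

Local Notation Hua := (hua_subgroup X eqv U zero inf).

(* Membership in G is carried along because G is not closed under pointwise
   equality of maps, and is_mu only fixes s pointwise. *)
Definition unit_mu (s : X -> X) : Prop :=
  G s /\ exists x, is_unit X eqv zero inf x /\ is_mu X U zero inf x s.

Lemma unit_mu_swap s : unit_mu s -> s zero = inf /\ s inf = zero.
Proof. intros (_ & x & _ & _ & Hs0 & Hsinf). exact (conj Hs0 Hsinf). Qed.

Lemma hua_unit_mu_comp m1 m2 :
  unit_mu m1 -> unit_mu m2 -> Hua (fun z => m2 (m1 z)).
Proof.
  intros (_ & x1 & Hx1 & Hm1) (_ & x2 & Hx2 & Hm2).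
  apply gen_of_generator. exists x1, x2, m1, m2.
  exact (conj Hx1 (conj Hx2 (conj Hm1 (conj Hm2 (fun _ => eq_refl))))).
Qed.

Lemma unit_mu_comp_G m1 m2 :
  unit_mu m1 -> unit_mu m2 -> G (fun z => m2 (m1 z)).
Proof. intros [Hm1 _] [Hm2 _]. exact (gen_comp _ _ _ _ Hm1 Hm2). Qed.

Lemma unit_mu_of_swap b1 g b2 : U inf b1 -> U zero g -> U inf b2 ->
  b2 (g (b1 zero)) = inf -> b2 (g (b1 inf)) = zero ->
  unit_mu (fun z => b2 (g (b1 z))).
Proof.
  intros Hb1 Hg Hb2 Hs0 Hsinf.
  set (s := fun z => b2 (g (b1 z))).
  assert (Hs : G s).
  { apply (gen_comp _ _ (fun z => g (b1 z)) b2); [apply gen_comp |];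
      eapply root_in_G; eassumption. }
  split; [exact Hs |].
  destruct (G_inverse s Hs) as (si & _ & _ & Hssi).
  destruct (root_conj s inf b1 Hs Hb1) as (u1 & Hu1 & Hu1s).
  destruct (root_conj s zero g Hs Hg) as (al & Hal & Hals).
  destruct (root_conj s inf b2 Hs Hb2) as (u2 & Hu2 & Hu2s).
  change (s inf) with (b2 (g (b1 inf))) in Hu1, Hu2. rewrite Hsinf in Hu1, Hu2.
  change (s zero) with (b2 (g (b1 zero))) in Hal. rewrite Hs0 in Hal.
  assert (Hfact : forall w, s w = u2 (al (u1 w))).
  { intro w. rewrite <- (Hssi w), Hu1s, Hals, Hu2s. reflexivity. }
  exists (al zero). split; [split |].
  - intro Hx. apply Hbasis, eqv_sym.
    apply (root_eqv_map zero u2 _ _ Hu2) in Hx.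
    rewrite (root_fix zero u2 Hu2), <- (root_fix zero u1 Hu1) in Hx at 1.
    rewrite <- Hfact in Hx. change (eqv (b2 (g (b1 zero))) zero) in Hx.
    rewrite Hs0 in Hx. exact Hx.
  - exact (root_not_eqv_pole inf al zero Hal Hbasis).
  - split; [| split; assumption].
    exists u1, al, u2. repeat split; assumption.
Qed.

Lemma root0_bruhat g b : U zero g -> U inf b -> b zero = g inf ->
  ~ eqv (g inf) inf -> exists c s, U inf c /\ unit_mu s /\
    forall z, g z = b (s (c z)).
Proof.
  intros Hg Hb Hbg Hginf.
  destruct (root_inv zero g Hg) as (gi & Hgi & Hgig & Hggi).
  assert (Hgi_inf : ~ eqv (gi inf) inf)
    by exact (fun H => Hginf (root_inv_bar_fix zero g gi inf Hgi Hgig inf_not_eqv_zero H)).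
  destruct (root_transitive inf zero (gi inf) Hbasis Hgi_inf) as (b0 & Hb0 & Hb00).
  destruct (root_inv inf b0 Hb0) as (b0i & Hb0i & _ & Hb0b0i).
  destruct (root_inv inf b Hb) as (bi & Hbi & Hbib & Hbbi).
  exists b0i, (fun z => bi (g (b0 z))). split; [exact Hb0i | split].
  - apply unit_mu_of_swap; try assumption.
    + rewrite Hb00, Hggi. apply (root_fix inf bi Hbi).
    + rewrite (root_fix inf b0 Hb0), <- Hbg. apply Hbib.
  - intro z. rewrite Hbbi, Hb0b0i. reflexivity.
Qed.

Lemma factor_moving a b : U_circ X eqv U zero a -> U inf b ->
  ~ eqv (b zero) zero ->
  exists c h d, U inf c /\ Hua h /\ G h /\ h inf = inf /\
    U_circ X eqv U zero d /\ forall z, b (a z) = d (h (c z)).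
Proof.
  intros [Ha Ha_bar] Hb Hb0.
  pose proof inf_not_eqv_zero as Hinf.
  destruct (root_inv inf b Hb) as (bi & Hbi & _ & Hbbi).
  assert (Hbi0 : ~ eqv (bi zero) zero).
  { intro H. apply Hb0, eqv_sym. rewrite <- (Hbbi zero) at 1.
    exact (root_eqv_map inf b _ _ Hb H). }
  assert (Hbi0' : ~ eqv (bi zero) inf) by exact (root_not_eqv_pole inf bi zero Hbi Hbasis).
  destruct (root_transitive zero inf (bi zero) Hinf Hbi0) as (g2 & Hg2 & Hg2inf).
  destruct (root0_bruhat g2 bi Hg2 Hbi (eq_sym Hg2inf)) as (c2 & s2 & Hc2 & Hs2 & Hg2f);
    [rewrite Hg2inf; exact Hbi0' |].
  destruct (root_inv zero g2 Hg2) as (g2i & Hg2i & Hg2ig2 & Hg2g2i).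
  set (g1 := fun z => g2i (a z)).
  assert (Hg1 : U zero g1) by exact (root_comp zero a g2i Ha Hg2i).
  assert (Hg1inf : ~ eqv (g1 inf) inf).
  { intro H. apply Hbi0'. rewrite <- Hg2inf.
    apply (root_inv_bar_fix zero g2 g2i inf Hg2i Hg2ig2 Hinf).
    apply (eqv_trans _ (g1 inf)); [| exact H].
    apply (root_eqv_map zero g2i _ _ Hg2i), eqv_sym, Ha_bar. }
  destruct (root_transitive inf zero (g1 inf) Hbasis Hg1inf) as (b1 & Hb1 & Hb10).
  destruct (root0_bruhat g1 b1 Hg1 Hb1 Hb10 Hg1inf) as (c1 & s1 & Hc1 & Hs1 & Hg1f).
  destruct (unit_mu_swap s1 Hs1) as [_ Hs1inf].
  destruct (unit_mu_swap s2 Hs2) as [Hs20 Hs2inf].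
  destruct (root_conj s2 inf (fun z => c2 (b1 z)) (proj1 Hs2) (root_comp inf b1 c2 Hb1 Hc2))
    as (d & Hd & Hds2).
  rewrite Hs2inf in Hd.
  assert (Hfact : forall z, b (a z) = d (s2 (s1 (c1 z)))).
  { intro z. rewrite <- (Hg2g2i (a z)). fold (g1 z).
    rewrite Hg2f, Hbbi, Hg1f, Hds2. reflexivity. }
  exists c1, (fun z => s2 (s1 z)), d.
  split; [exact Hc1 |]. split; [exact (hua_unit_mu_comp s1 s2 Hs1 Hs2) |].
  split; [exact (unit_mu_comp_G s1 s2 Hs1 Hs2) |].
  split; [rewrite Hs1inf; exact Hs20 |].
  split; [split; [exact Hd |] | exact Hfact].
  (* inf d = inf (a b), and a is bar-trivial. *)
  apply (root_bar_trivial zero d inf Hd Hinf).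
  specialize (Hfact inf). rewrite (root_fix inf c1 Hc1), Hs1inf, Hs20 in Hfact.
  rewrite <- Hfact. rewrite <- (root_fix inf b Hb) at 2.
  apply (root_eqv_map inf b _ _ Hb), Ha_bar.
Qed.

Lemma factor_fixing a b : U_circ X eqv U zero a -> U inf b ->
  eqv (b zero) zero ->
  exists c h d, U inf c /\ Hua h /\ U_circ X eqv U zero d /\
    forall z, b (a z) = d (h (c z)).
Proof.
  intros Ha Hb Hb0.
  destruct (exists_outside_classes zero inf) as (e & He0 & Heinf).
  destruct (root_transitive inf zero e Hbasis Heinf) as (b1 & Hb1 & Hb10).
  destruct (root_inv inf b1 Hb1) as (b1i & Hb1i & Hb1ib1 & Hb1b1i).
  set (b2 := fun z => b (b1i z)).
  assert (Hb2 : U inf b2) by exact (root_comp inf b1i b Hb1i Hb).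
  assert (Hb20 : ~ eqv (b2 zero) zero).
  { intro H. apply He0, eqv_sym.
    assert (Hb1i0 : eqv (b1i zero) zero).
    { apply (root_eqv_reflect inf b _ _ Hb).
      exact (eqv_trans _ _ _ H (eqv_sym _ _ Hb0)). }
    apply (root_eqv_map inf b1 _ _ Hb1) in Hb1i0.
    rewrite Hb1b1i, Hb10 in Hb1i0. exact Hb1i0. }
  destruct (factor_moving a b1 Ha Hb1) as (c1 & h1 & d1 & Hc1 & Hh1 & Gh1 & Hh1inf & Hd1 & Hf1);
    [rewrite Hb10; exact He0 |].
  destruct (factor_moving d1 b2 Hd1 Hb2 Hb20) as (c2 & h2 & d2 & Hc2 & Hh2 & _ & _ & Hd2 & Hf2).
  destruct (root_conj_pullback h1 inf c2 Gh1 (eq_ind_r (fun y => U y c2) Hc2 Hh1inf))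
    as (c2' & Hc2' & Hc2'h1).
  exists (fun z => c2' (c1 z)), (fun z => h2 (h1 z)), d2.
  split; [exact (root_comp inf c1 c2' Hc1 Hc2') |].
  split; [exact (gen_comp _ _ _ _ Hh1 Hh2) |].
  split; [exact Hd2 |].
  intro z. rewrite <- (Hb1ib1 (a z)). fold (b2 (b1 (a z))).
  rewrite Hf1, Hf2, Hc2'h1. reflexivity.
Qed.

End LocalMoufangSet.

Theorem mainTheorem5 (X : Type) (eqv : X -> X -> Prop)
  (U : X -> (X -> X) -> Prop) (zero inf : X)
  (HLMS : is_local_moufang_set X eqv U) (Hbasis : ~ eqv zero inf) :
  forall a b, U_circ X eqv U zero a -> U inf b ->
    exists c h d, U inf c /\ hua_subgroup X eqv U zero inf h /\
      U_circ X eqv U zero d /\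
      forall z, b (a z) = d (h (c z)).
Proof.
  intros a b Ha Hb.
  destruct (classic (eqv (b zero) zero)) as [Hb0 | Hb0].
  - exact (factor_fixing X eqv U HLMS zero inf Hbasis a b Ha Hb Hb0).
  - destruct (factor_moving X eqv U HLMS zero inf Hbasis a b Ha Hb Hb0)
      as (c & h & d & Hc & Hh & _ & _ & Hd & Hfact).
    exists c, h, d. auto.
Qed.
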